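(* Let $\mathbb{F}$ be a field, $D=(X,E,s,t)$ a finite directed multigraph, $U$ an $\mathbb{F}$-vector space, $\phi:X\to U$ a map, and $T\subset E$ a spanning forest of $D$. Let $\{r_1,\dots,r_{\delta_\phi}\}$ be any $\mathbb{F}$-basis of $\mathcal{Z}_{\mathrm{alg}}:=\mathrm{Im}(B_D)\cap\mathrm{Ker}(\hat\phi)$, and for each $i$ let $\zeta_{r_i}\in\mathrm{Ker}(\partial_\phi)$ be any element with $B_D(\zeta_{r_i})=r_i$ (such elements exist). Then $$\{Z_e^{(\mathrm{top})}\}_{e\in E\setminus T}\cup\{\zeta_{r_1},\dots,\zeta_{r_{\delta_\phi}}\}$$ is an $\mathbb{F}$-basis of $\mathrm{Ker}(\partial_\phi)$.
   Context: A finite directed multigraph $D=(X,E,s,t)$ has finite sets $X,E$ and maps $s,t:E\to X$ (loops and parallel edges allowed); $c(D)$ is its number of weakly connected components. $B_D:\mathbb{F}^E\to\mathbb{F}^X$ is linear with $B_D(\mathbf{1}_e)=\mathbf{1}_{t(e)}-\mathbf{1}_{s(e)}$; $\hat\phi:\mathbb{F}^X\to U$ is the linear extension of $\phi$; $\partial_\phi:\mathbb{F}^E\to U$ is linear with $\partial_\phi(\mathbf{1}_e)=\phi(t(e))-\phi(s(e))$; $\delta_\phi:=\dim(\mathrm{Im}(B_D)\cap\mathrm{Ker}(\hat\phi))$. A spanning forest is a subset $T\subset E$ whose underlying undirected graph is acyclic and with $|T|=|X|-c(D)$. For vertices $a,b$ in the same weakly connected component, let $a=y_0,\dots,y_m=b$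 be the unique simple path in the underlying graph of $T$, $g_k\in T$ the edge joining $y_{k-1},y_k$, $\eta_k=+1$ if $s(g_k)=y_{k-1}$ and $\eta_k=-1$ if $s(g_k)=y_k$; the signed path vector is $F[a,b]=\sum_k\eta_k\mathbf{1}_{g_k}$ (with $F[a,a]=0$). For $e\in E\setminus T$, the topological cycle is $Z_e^{(\mathrm{top})}:=\mathbf{1}_e-F[s(e),t(e)]\in\mathbb{F}^E$. *)

From HB Require Import structures.
From mathcomp Require Import all_boot all_order all_algebra.
Set Implicit Arguments. Unset Strict Implicit. Unset Printing Implicit Defensive.
Import Order.TTheory GRing.Theory Num.Theory.
Local Open Scope ring_scope.

Section Graph.
Variables (F : fieldType) (X E : finType) (s t : E -> X).

(** Vectors: F^E is {ffun E -> F^o}, F^X is {ffun X -> F^o}. *)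
Definition ind (A : finType) (a : A) : {ffun A -> F^o} := [ffun y => (y == a)%:R].

Definition incB (w : {ffun E -> F^o}) : {ffun X -> F^o} :=
  \sum_(e : E) w e *: (ind (t e) - ind (s e)).

Definition phihat (U : lmodType F) (phi : X -> U) (v : {ffun X -> F^o}) : U :=
  \sum_(x : X) v x *: phi x.

Definition dphi (U : lmodType F) (phi : X -> U) (w : {ffun E -> F^o}) : U :=
  \sum_(e : E) w e *: (phi (t e) - phi (s e)).

(** Undirected walks: a step (g, b) traverses edge g forwards (from s g to t g)
    if b = true and backwards (from t g to s g) if b = false. *)
Definition stsrc (st : E * bool) : X := if st.2 then s st.1 else t st.1.
Definition sttgt (st : E * bool) : X := if st.2 then t st.1 else s st.1.

Fixpoint walk_ok (a b : X) (p : seq (E * bool)) : bool :=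
  match p with
  | [::] => a == b
  | st :: p' => (stsrc st == a) && walk_ok (sttgt st) b p'
  end.

Definition simple_tpath (T : {set E}) (a b : X) (p : seq (E * bool)) : bool :=
  [&& walk_ok a b p, uniq (a :: map sttgt p) & all (fun st => st.1 \in T) p].

(** Signed path vector sum_k eta_k 1_{g_k}, eta_k = +1 iff s(g_k) = y_{k-1}. *)
Definition signvec (p : seq (E * bool)) : {ffun E -> F^o} :=
  \sum_(st <- p) (if st.2 then 1 else -1) *: ind st.1.

(** Underlying undirected graph of T is acyclic: no cycle (nonempty closed walk
    with pairwise distinct edges and pairwise distinct vertices);
    loops and pairs of parallel edges count as cycles. *)
Definition acyclic (T : {set E}) : Prop :=
  forall (a : X) (p : seq (E * bool)),
    p != [::] -> all (fun st => st.1 \in T) p -> uniq (map fst p) ->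
    walk_ok a a p -> uniq (map sttgt p) -> False.

Definition wadj : rel X :=
  fun x y => [exists e, ((s e == x) && (t e == y)) || ((s e == y) && (t e == x))].
Definition ncomp : nat := n_comp wadj predT.

Definition spanning_forest (T : {set E}) : Prop :=
  acyclic T /\ #|T| = (#|X| - ncomp)%N.

(** Z is the topological cycle of e w.r.t. T:  1_e - F[s e, t e], where
    F[a,b] is the signed path vector of the (unique) simple T-path from a to b. *)
Definition is_top_cycle (T : {set E}) (e : E) (Z : {ffun E -> F^o}) : Prop :=
  exists p, simple_tpath T (s e) (t e) p /\ Z = ind e - signvec p.

End Graph.

From HB Require Import structures.
From mathcomp Require Import all_boot all_order all_algebra zify.
Set Implicit Arguments. Unset Strict Implicit. Unset Printing Implicit Defensive.
Import GRing.Theory.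
Local Open Scope ring_scope.

(* Every topological cycle Z_e lies in Ker B_D (the boundary of the T-path
   telescopes), and on E \ T it is the indicator of e.  So for z in Ker B_D the
   vector z - sum_{e notin T} z_e Z_e lies in Ker B_D and is supported on T.  But
   B_D is injective on F^T: the T-paths give B_D(F^T) = Im B_D, and Im B_D contains
   the |X| - c(D) = |T| independent vectors 1_x - 1_(root x), x not a root of its
   component.  Hence the Z_e span Ker B_D.  For z in Ker d_phi, B_D z lies in
   Im B_D and in Ker phi-hat (as phi-hat o B_D = d_phi), so it is a combination of
   the r_i, and subtracting the same combination of the zeta_(r_i) brings z into
   Ker B_D.  Freeness: B_D kills the free family of the Z_e and maps the zeta_(r_i)
   onto the free family r_i. *)

Lemma free_map_delta (F : fieldType) (I B : finType) (A : {pred I})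
    (v : I -> {ffun B -> F^o}) (y : I -> B) :
  {in A &, forall i j, v i (y j) = (i == j)%:R} -> free [seq v i | i <- enum A].
Proof.
move=> v_delta; apply/(freeP (X := in_tuple _)) => k sum_k0 j.
have a0 : I by case: j; rewrite size_map; case: (enum A) => // a.
have lt_size i : (i < size [seq v i | i <- enum A])%N -> (i < size (enum A))%N.
  by rewrite size_map.
have inA i : (i < size (enum A))%N -> nth a0 (enum A) i \in A.
  by move=> lt_i; rewrite -mem_enum mem_nth.
have := congr1 (fun w : {ffun B -> F^o} => w (y (nth a0 (enum A) j))) sum_k0.
rewrite sum_ffunE ffunE (bigD1 j) //= big1 => [|i neq_ij]; rewrite ffunE.
  rewrite (nth_map a0) ?lt_size // v_delta ?inA ?lt_size // eqxx addr0 => <-.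
  exact: (esym (mulr1 _)).
rewrite (nth_map a0) ?lt_size // v_delta ?inA ?lt_size //.
rewrite nth_uniq ?enum_uniq ?lt_size // (negbTE (neq_ij : (i : nat) != j)).
exact: mulr0.
Qed.

Lemma free_cat_ker (K : fieldType) (V W : vectType K) (f : 'Hom(V, W))
    (Z Y : seq V) :
  free Z -> {subset Z <= lker f} -> free (map f Y) -> free (Z ++ Y).
Proof.
move=> freeZ Z_ker free_fY.
have dim_fY : \dim (f @: <<Y>>) = size Y by rewrite limg_span (eqP free_fY) size_map.
have := limg_ker_dim f <<Y>>; have := dim_span Y; rewrite dim_fY => le_Y dim_Y.
have /eqP : \dim (<<Y>> :&: lker f) = 0%N by lia.
rewrite dimv_eq0 => /eqP Y_ker0.
rewrite cat_free freeZ /=; apply/andP; split; first by apply/eqP; lia.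
apply/directv_addP/eqP; rewrite -subv0 -Y_ker0 capvC.
by apply: capvS => //; apply/span_subvP.
Qed.

Lemma span_linear_eq0 (K : fieldType) (V : vectType K) (W : lmodType K)
    (f : {linear V -> W}) (S : seq V) (v : V) :
  {in S, forall u, f u = 0} -> v \in <<S>>%VS -> f v = 0.
Proof.
move=> S0 /(@coord_span _ _ _ (in_tuple S)) ->; rewrite linear_sum big1 // => i _.
by rewrite linearZZ S0 ?scaler0 // mem_nth.
Qed.

Lemma ffun_sum_ind (F : fieldType) (A : finType) (w : {ffun A -> F^o}) :
  w = \sum_(a : A) w a *: ind F a.
Proof.
apply/ffunP => y; rewrite sum_ffunE (bigD1 y) //= big1 => [|a neq_ay].
  by rewrite !ffunE eqxx addr0; exact: (esym (mulr1 _)).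
by rewrite !ffunE eq_sym (negbTE neq_ay); exact: mulr0.
Qed.

Section Incidence.
Variables (F : fieldType) (X E : finType) (s t : E -> X).

Lemma dphi_is_linear (V : lmodType F) (g : X -> V) : linear (dphi s t g).
Proof.
move=> a u v; rewrite /dphi scaler_sumr -big_split; apply: eq_bigr => e _.
by rewrite !ffunE scalerDl scalerA.
Qed.
HB.instance Definition _ (V : lmodType F) (g : X -> V) :=
  GRing.isLinear.Build F _ _ _ (dphi s t g) (dphi_is_linear g).
HB.instance Definition _ :=
  GRing.isLinear.Build F _ _ _ (incB s t) (dphi_is_linear (@ind F X)).

Lemma incB_dphi : incB s t = dphi s t (@ind F X). Proof. by []. Qed.

Lemma dphi_ind (V : lmodType F) (g : X -> V) e :
  dphi s t g (ind F e) = g (t e) - g (s e).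
Proof.
rewrite /dphi (bigD1 e) //= big1 => [|e' neq_e'e]; rewrite ffunE.
  by rewrite eqxx scale1r addr0.
by rewrite (negbTE neq_e'e) scale0r.
Qed.

Lemma dphi_signvec (V : lmodType F) (g : X -> V) p a b :
  walk_ok s t a b p -> dphi s t g (signvec F p) = g b - g a.
Proof.
elim: p a => [|[e [|]] p IHp] a /=.
- by move/eqP=> ->; rewrite /signvec big_nil linear0 subrr.
- case/andP; rewrite /stsrc /sttgt /= => /eqP <- /IHp IH.
  rewrite /signvec big_cons -/(signvec F p) linearD linearZZ /= IH dphi_ind.
  by rewrite scale1r addrC subrKA.
- case/andP; rewrite /stsrc /sttgt /= => /eqP <- /IHp IH.
  rewrite /signvec big_cons -/(signvec F p) linearD linearZZ /= IH dphi_ind.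
  by rewrite scaleN1r opprB addrC subrKA.
Qed.

Lemma dphi_top_cycle (V : lmodType F) (g : X -> V) T e Z :
  is_top_cycle s t T e Z -> dphi s t g Z = 0.
Proof.
case=> p [/and3P[walk_p _ _] ->].
by rewrite linearB /= dphi_ind (dphi_signvec _ walk_p) subrr.
Qed.

Lemma phihat_is_linear (U : lmodType F) (phi : X -> U) : linear (phihat phi).
Proof.
move=> a u v; rewrite /phihat scaler_sumr -big_split; apply: eq_bigr => x _.
by rewrite !ffunE scalerDl scalerA.
Qed.
HB.instance Definition _ (U : lmodType F) (phi : X -> U) :=
  GRing.isLinear.Build F _ _ _ (phihat phi) (phihat_is_linear phi).

Lemma phihat_ind (U : lmodType F) (phi : X -> U) x : phihat phi (ind F x) = phi x.
Proof.
rewrite /phihat (bigD1 x) //= big1 => [|y neq_yx]; rewrite ffunE.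
  by rewrite eqxx scale1r addr0.
by rewrite (negbTE neq_yx) scale0r.
Qed.

Lemma phihat_incB (U : lmodType F) (phi : X -> U) w :
  phihat phi (incB s t w) = dphi s t phi w.
Proof.
by rewrite linear_sum; apply: eq_bigr => e _; rewrite linearZZ linearB /= !phihat_ind.
Qed.

Definition incB_hom : 'Hom({ffun E -> F^o}, {ffun X -> F^o}) := linfun (incB s t).

Lemma wadj_sym : symmetric (wadj s t).
Proof. by move=> x y; apply/existsP/existsP => -[e]; exists e; rewrite orbC. Qed.

Lemma connect_incB x y : connect (wadj s t) x y ->
  exists w, incB s t w = ind F y - ind F x.
Proof.
case/connectP => p; elim: p x => [|z p IHp] x /=.
  by move=> _ ->; exists 0; rewrite linear0 subrr.
case/andP => /existsP[e adj_e] /IHp IH /IH[w incB_w].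
have [w1 incB_w1] : exists w1, incB s t w1 = ind F z - ind F x.
  rewrite incB_dphi; case/orP: adj_e => /andP[/eqP s_e /eqP t_e].
    by exists (ind F e); rewrite dphi_ind s_e t_e.
  by exists (- ind F e); rewrite linearN /= dphi_ind s_e t_e opprB.
by exists (w + w1); rewrite linearD /= incB_w incB_w1 addrA subrK.
Qed.

Lemma card_nonroots : #|predC (roots (wadj s t))| = (#|X| - ncomp s t)%N.
Proof.
rewrite /ncomp /n_comp_mem -(cardC (roots (wadj s t))).
have -> : #|predI (roots (wadj s t)) (mem predT)| = #|roots (wadj s t)|.
  by apply: eq_card => x; rewrite !inE andbT.
by rewrite addKn.
Qed.

Lemma dim_limg_incB : (#|X| - ncomp s t <= \dim (limg incB_hom))%N.
Proof.
pose b x := ind F x - ind F (fingraph.root (wadj s t) x).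
pose R := [seq b x | x <- enum (predC (roots (wadj s t)))].
have R_img : (<<R>> <= limg incB_hom)%VS.
  apply/span_subvP => _ /mapP[x _ ->].
  have [w incB_w] := connect_incB (connect_root (wadj s t) x).
  by rewrite /b -opprB -incB_w -linearN -lfunE memv_img ?memvf.
have freeR : free R.
  apply: (free_map_delta (y := id)) => x y; rewrite !inE => _ y_nonroot.
  rewrite /b !ffunE /= eq_sym; have -> : (y == fingraph.root (wadj s t) x) = false.
    apply: (contraNF _ y_nonroot) => /eqP->.
    by rewrite /roots fingraph.root_root ?eqxx //; exact: sym_connect_sym wadj_sym.
  by rewrite subr0.
by rewrite -card_nonroots cardE -(size_map b) -(eqP freeR) dimvS.
Qed.

Section Forest.
Variables (T : {set E}) (Ztop : E -> {ffun E -> F^o}).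
Hypothesis card_T : #|T| = (#|X| - ncomp s t)%N.
Hypothesis Ztop_cycle : forall e, e \notin T -> is_top_cycle s t T e (Ztop e).

Let forest_span := <<[seq ind F e | e <- enum T]>>%VS.

Lemma ind_forest e : e \in T -> ind F e \in forest_span.
Proof. by move=> eT; apply/memv_span/map_f; rewrite mem_enum. Qed.

Lemma top_cycle_offT e e' : e \notin T -> e' \notin T -> Ztop e e' = (e' == e)%:R.
Proof.
move=> eT e'T; have [p [/and3P[_ _ pT] ->]] := Ztop_cycle eT.
rewrite !ffunE /signvec sum_ffunE big_seq big1 ?subr0 // => st st_p.
rewrite !ffunE; case: eqP => [e_st | _]; last exact: mulr0.
by move: e'T; rewrite e_st (allP pT).
Qed.

Lemma free_top_cycles : free [seq Ztop e | e <- enum (~: T)].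
Proof.
apply: (free_map_delta (A := ~: T) (y := id)) => e e'; rewrite !inE => eT e'T.
by rewrite top_cycle_offT // eq_sym.
Qed.

Lemma limg_incB_forest : (limg incB_hom <= incB_hom @: forest_span)%VS.
Proof.
apply/subvP => _ /memv_imgP[u _ ->]; rewrite (ffun_sum_ind u) linear_sum.
apply: memv_suml => e _; rewrite linearZZ; apply: memvZ.
have [eT | eT] := boolP (e \in T); first exact/memv_img/ind_forest.
have [p [/and3P[_ _ pT] Ze]] := Ztop_cycle eT.
have -> : ind F e = Ztop e + signvec F p by rewrite Ze subrK.
rewrite linearD /= lfunE /= incB_dphi (dphi_top_cycle _ (Ztop_cycle eT)) add0r.
apply: memv_img.
rewrite /signvec big_seq; apply: memv_suml => st st_p.
by apply/memvZ/ind_forest; exact: (allP pT).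
Qed.

Lemma forest_span_ker_incB : (forest_span :&: lker incB_hom = 0)%VS.
Proof.
apply/eqP; rewrite -dimv_eq0; have := limg_ker_dim incB_hom forest_span.
have := dim_span [seq ind F e | e <- enum T]; rewrite size_map -cardE.
have := dimvS limg_incB_forest; have := dim_limg_incB; rewrite -/forest_span.
lia.
Qed.

Lemma forest_supported_incB_eq0 (w : {ffun E -> F^o}) :
  (forall e, e \notin T -> w e = 0) -> incB s t w = 0 -> w = 0.
Proof.
move=> w_offT incB_w0; apply/eqP; rewrite -memv0 -forest_span_ker_incB memv_cap.
rewrite memv_ker lfunE /= incB_w0 eqxx andbT (ffun_sum_ind w).
apply: memv_suml => e _; have [eT | eT] := boolP (e \in T).
  exact/memvZ/ind_forest.
by rewrite w_offT ?scale0r ?mem0v.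
Qed.

Lemma incB_eq0_top_cycles (z : {ffun E -> F^o}) :
  incB s t z = 0 -> z = \sum_(e in ~: T) z e *: Ztop e.
Proof.
move=> incB_z0; apply/eqP; rewrite -subr_eq0; apply/eqP/forest_supported_incB_eq0.
  move=> e' e'T; rewrite !ffunE sum_ffunE (bigD1 e') ?inE //=.
  rewrite big1 => [|e /andP[/[!inE] eT ne]].
    by rewrite ffunE top_cycle_offT // eqxx addr0 -[_ *: _]/(z e' * 1) mulr1 subrr.
  by rewrite ffunE top_cycle_offT // eq_sym (negbTE ne); exact: mulr0.
rewrite incB_dphi linearB /= -incB_dphi incB_z0 sub0r [incB s t _]linear_sum.
rewrite big1 ?oppr0 // => e /[!inE] eT.
by rewrite linearZZ /= incB_dphi (dphi_top_cycle _ (Ztop_cycle eT)) scaler0.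
Qed.

Lemma incB_ker_top_cycles (z : {ffun E -> F^o}) :
  incB s t z = 0 -> z \in <<[seq Ztop e | e <- enum (~: T)]>>%VS.
Proof.
move=> /incB_eq0_top_cycles ->; apply: memv_suml => e eT.
by apply/memvZ/memv_span/map_f; rewrite mem_enum.
Qed.

End Forest.
End Incidence.

Theorem theorem2p15 (F : fieldType) (X E : finType) (s t : E -> X)
  (U : lmodType F) (phi : X -> U) (T : {set E})
  (HT : spanning_forest s t T)
  (Ztop : E -> {ffun E -> F^o})
  (HZ : forall e, e \notin T -> is_top_cycle s t T e (Ztop e))
  (rs : seq {ffun X -> F^o})
  (Hrs_free : free rs)
  (Hrs_span : forall v : {ffun X -> F^o},
      v \in <<rs>>%VS <-> ((exists w, incB s t w = v) /\ phihat phi v = 0))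
  (zeta : {ffun X -> F^o} -> {ffun E -> F^o})
  (Hzeta : forall r, r \in rs -> dphi s t phi (zeta r) = 0 /\ incB s t (zeta r) = r) :
  let S := [seq Ztop e | e <- enum (~: T)] ++ map zeta rs in
  free S /\ (forall z : {ffun E -> F^o}, z \in <<S>>%VS <-> dphi s t phi z = 0).
Proof.
move=> S; case: HT => _ card_T.
have Ztop_ker e : e \in enum (~: T) -> dphi s t phi (Ztop e) = 0.
  by rewrite mem_enum inE => /HZ /dphi_top_cycle ->.
have incB_zeta : map (incB_hom F s t) (map zeta rs) = rs.
  rewrite -map_comp -[RHS]map_id; apply/eq_in_map => r rs_r.
  by rewrite /= lfunE /= (Hzeta r rs_r).2.
split.
  apply: (free_cat_ker (f := incB_hom F s t)); last by rewrite incB_zeta.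
    exact: free_top_cycles HZ.
  move=> _ /mapP[e /[!mem_enum] /[!inE] /HZ Ze ->].
  by rewrite memv_ker lfunE /= incB_dphi (dphi_top_cycle _ Ze).
move=> z; split.
  apply: span_linear_eq0 => u; rewrite mem_cat.
  by case/orP=> [/mapP[e /Ztop_ker + ->] | /mapP[r /Hzeta[+ _] ->]].
move=> dphi_z0.
have : incB s t z \in <<rs>>%VS by apply/Hrs_span; split; [exists z | rewrite phihat_incB].
rewrite -incB_zeta -limg_span => /memv_imgP[y y_span incB_yz].
have -> : z = (z - y) + y by rewrite subrK.
rewrite span_cat; apply: memv_add => //; apply: (incB_ker_top_cycles card_T HZ).
by rewrite incB_dphi linearB /= -incB_dphi incB_yz lfunE subrr.
Qed.
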